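(* Let $K\in\mathbb{N}_+$, let $\mathcal{H}$ be a separable real RKHS over a non-empty set $\mathcal{X}$ with reproducing kernel $\kappa$ that admits a complete interpolating sampling sequence $\{x_\lambda\}_{\lambda\in\Lambda}\subseteq\mathcal{X}$, and let $\mathcal{K}\subseteq\mathcal{H}$ be non-empty and locally compact. Then the set of restrictions to $\mathcal{K}$ of sampling-based neural operators $\hat f:\mathcal{H}\to\mathbb{R}^K$ is dense in $C(\mathcal{K},\mathbb{R}^K)$ for the compact-open topology (uniform convergence on compact subsets).
   Context: A sequence $\{x_\lambda\}_{\lambda\in\Lambda}\subseteq\mathcal{X}$, $\Lambda\subseteq\mathbb{N}$, is sampling if there is $C\ge1$ with $\|f\|/C\le(\sum_{\lambda}|f(x_\lambda)|^2)^{1/2}\le C\|f\|$ for all $f\in\mathcal{H}$; it is interpolating if for every square-summable $(v_\lambda)$ there is $f\in\mathcal{H}$ with $f(x_\lambda)=v_\lambda$ for all $\lambda$; complete interpolating sampling means both. A map $\hat f:\mathcal{H}\to\mathbb{R}^K$ is a sampling-based neural operator (SNO) if there exist $S,L\in\mathbb{N}_+$, points $x_1,\dots,x_S\in\mathcal{X}$, integers $d_0=S,d_1,\dots,d_{L+1}=K$ and affine maps $A_l:\mathbb{R}^{d_l}\to\mathbb{R}^{d_{l+1}}$ such that for all $f\in\mathcal{H}$, $\hat f(f)=A_L\circ(\mathrm{ReLU}\bullet A_{L-1})\circ\cdots\circ(\mathrm{ReLU}\bullet A_1)\big((\langle f,\kappa(\cdot,x_s)\rangle_{\mathcal{H}})_{s=1}^S\big)$,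 with $\mathrm{ReLU}(t)=\max\{t,0\}$ applied componentwise. *)

From HB Require Import structures.
From mathcomp Require Import all_boot all_order all_algebra.
From mathcomp Require Import all_classical all_reals all_analysis.
Set Implicit Arguments. Unset Strict Implicit. Unset Printing Implicit Defensive.
Import Order.TTheory GRing.Theory Num.Theory.
Import numFieldNormedType.Exports.
Local Open Scope classical_set_scope.
Local Open Scope ring_scope.

Section Defs.
Variable R : realType.

(* [ip] is an inner product on the normed space [V] inducing its norm.
   Together with [V : completeNormedModType R] this makes V a real Hilbert space. *)
Definition inner_product_inducing_norm (V : normedModType R) (ip : V -> V -> R) :=
  [/\ (forall u v, ip u v = ip v u),
      (forall (a : R) u v w, ip (a *: u + v) w = a * ip u w + ip v w)
    & (forall v, ip v v = `|v| ^+ 2)].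

Definition separable_space (T : topologicalType) :=
  exists D : set T, countable D /\ dense D.

(* V is (identified, via the injective linear map [ev], with) a space of real
   functions on X; [kappa] is the reproducing kernel: for each x, the function
   kappa(.,x) is the element [ksec x] of V, and <f, kappa(.,x)> = f(x). *)
Definition is_RKHS (X : Type) (V : normedModType R) (ip : V -> V -> R)
    (ev : V -> X -> R) (kappa : X -> X -> R) (ksec : X -> V) :=
  [/\ inner_product_inducing_norm ip,
      (forall (a : R) u v x, ev (a *: u + v) x = a * ev u x + ev v x),
      injective ev,
      (forall x y, ev (ksec x) y = kappa y x)
    & (forall f x, ip f (ksec x) = ev f x)].

(* sampling: exists C >= 1, ||f||/C <= (sum_{l in Lam} |f(x_l)|^2)^(1/2) <= C ||f||
   (stated after squaring, in the extended reals, so the sum may be infinite a priori) *)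
Definition sampling_seq (X : Type) (V : normedModType R) (ev : V -> X -> R)
    (Lam : set nat) (xs : nat -> X) :=
  exists C : R, 1 <= C /\
    forall f : V,
      (((`|f| / C) ^+ 2)%:E <= \esum_(l in Lam) ((ev f (xs l)) ^+ 2)%:E)%E /\
      (\esum_(l in Lam) ((ev f (xs l)) ^+ 2)%:E <= ((C * `|f|) ^+ 2)%:E)%E.

Definition interpolating_seq (X : Type) (V : normedModType R) (ev : V -> X -> R)
    (Lam : set nat) (xs : nat -> X) :=
  forall v : nat -> R,
    (\esum_(l in Lam) ((v l) ^+ 2)%:E < +oo)%E ->
    exists f : V, forall l, Lam l -> ev f (xs l) = v l.

Definition complete_interpolating_sampling (X : Type) (V : normedModType R)
    (ev : V -> X -> R) (Lam : set nat) (xs : nat -> X) :=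
  sampling_seq ev Lam xs /\ interpolating_seq ev Lam xs.

Definition locally_compact_subset (T : topologicalType) (A : set T) :=
  forall a, A a -> exists2 N, nbhs a N &
    exists C : set T, [/\ compact C, C `<=` A & N `&` A `<=` C].

(* [net n m]: a map R^n -> R^m of the form A_L o (ReLU o A_{L-1}) o ... o (ReLU o A_1),
   L >= 1, with affine maps A_l (vectors are row vectors, A(x) = x *m W + b). *)
Inductive net : nat -> nat -> Type :=
  | NOut n m : 'M[R]_(n, m) -> 'rV[R]_m -> net n m
  | NLayer n k m : 'M[R]_(n, k) -> 'rV[R]_k -> net k m -> net n m.

Definition relu_vec k (x : 'rV[R]_k) : 'rV[R]_k := \row_j Num.max (x 0 j) 0.

Fixpoint net_eval n m (N : net n m) : 'rV[R]_n -> 'rV[R]_m :=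
  match N in net n m return 'rV[R]_n -> 'rV[R]_m with
  | NOut _ _ W b => fun x => x *m W + b
  | NLayer _ _ _ W b N' => fun x => net_eval N' (relu_vec (x *m W + b))
  end.

Definition is_SNO (X : Type) (V : normedModType R) (ip : V -> V -> R)
    (ksec : X -> V) (Kout : nat) (F : V -> 'rV[R]_Kout) :=
  exists S : nat, (0 < S)%N /\
    exists (xs : 'I_S -> X) (N : net S Kout),
      forall f : V, F f = net_eval N (\row_s ip f (ksec (xs s))).

End Defs.

From HB Require Import structures.
From mathcomp Require Import all_boot all_order all_algebra.
From mathcomp Require Import all_classical all_reals all_analysis.
From mathcomp Require Import ring lra.
Import Order.TTheory GRing.Theory Num.Theory.
Import numFieldNormedType.Exports.
Local Open Scope classical_set_scope.
Local Open Scope ring_scope.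

Set Implicit Arguments.
Unset Strict Implicit.
Unset Printing Implicit Defensive.

(* Since the samples f(x_l) = <f, kappa(., x_l)> depend continuously on f and
   (by the lower sampling bound) determine f, a compactness argument on C x C
   gives n such that the pseudo-distance d_n(f, c) = sum_(l < n) |f(x_l) - c(x_l)|
   controls g on C: d_n(f, c) < 1/(n+1) forces |g f - g c| < eps/4.  Covering C
   by finitely many d_n-balls with centres c_j, the McShane-type envelope
   max_j (g(c_j) - L d_n(f, c_j)) is uniformly eps/2-close to g on C once L is
   large and the balls small.  As a maximum of affine combinations of
   |f(x_l) - c_j(x_l)|, it is a ReLU network applied to the samples f(x_l),
   i.e. a sampling-based neural operator. *)

Section ReluNets.
Context {R : realType}.
Implicit Types n m k p : nat.

Definition net_map n m (F : 'rV[R]_n -> 'rV[R]_m) :=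
  exists N : net R n m, net_eval N =1 F.

Lemma net_map_affine n m (W : 'M[R]_(n, m)) b : net_map (fun x => x *m W + b).
Proof. by exists (NOut W b). Qed.

Lemma net_map_layer n k m (W : 'M[R]_(n, k)) b (G : 'rV_k -> 'rV_m) :
  net_map G -> net_map (fun x => G (relu_vec (x *m W + b))).
Proof. by move=> [N NG]; exists (NLayer W b N) => x /=; rewrite NG. Qed.

Lemma net_map_comp_affine n k m (W : 'M[R]_(n, k)) b (G : 'rV_k -> 'rV_m) :
  net_map G -> net_map (fun x => G (x *m W + b)).
Proof.
move=> [N NG]; case: N G W b NG => [{}k {}m W' b'|{}k k' {}m W' b' N] G W b NG.
  exists (NOut (W *m W') (b *m W' + b')) => x /=.
  by rewrite -NG /= mulmxDl mulmxA addrA.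
exists (NLayer (W *m W') (b *m W' + b') N) => x /=.
by rewrite -NG /= mulmxDl mulmxA addrA.
Qed.

Lemma net_map_comp n k m (F : 'rV[R]_n -> 'rV[R]_k) (G : 'rV_k -> 'rV_m) :
  net_map F -> net_map G -> net_map (G \o F).
Proof.
move=> [N NF]; elim: N F NF G => [{}n {}k W b|{}n k' {}k W b N IH] F NF G NG.
  have -> : G \o F = (fun x => G (x *m W + b)) by apply: funext => x /=; rewrite -NF.
  exact: net_map_comp_affine.
have -> : G \o F = (fun x => (G \o net_eval N) (relu_vec (x *m W + b))).
  by apply: funext => x /=; rewrite -NF.
exact/net_map_layer/(IH _ (fun=> erefl)).
Qed.

Lemma relu_row_mx n m (x : 'rV[R]_n) (y : 'rV[R]_m) :
  relu_vec (row_mx x y) = row_mx (relu_vec x) (relu_vec y).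
Proof. by apply/matrixP => i j; rewrite !mxE; case: splitP => j' _; rewrite !mxE. Qed.

Lemma relu_subN n (x : 'rV[R]_n) : relu_vec x - relu_vec (- x) = x.
Proof.
apply/matrixP => i j; rewrite !mxE !ord1.
by case: (ler0P (x 0 j)) => ?; case: (ler0P (- x 0 j)) => ?; lra.
Qed.

(* The identity is carried through a ReLU layer as [relu x - relu (- x)]. *)
Lemma net_map_par_id n m p (F : 'rV[R]_n -> 'rV[R]_m) :
  net_map F -> net_map (fun z : 'rV_(n + p) => row_mx (F (lsubmx z)) (rsubmx z)).
Proof.
move=> [N NF]; elim: N F NF => [{}n {}m W b|{}n k {}m W b N IH] F NF.
  exists (NOut (block_mx W 0 0 1%:M) (row_mx b 0)) => z /=.
  rewrite -NF /= -{1}(hsubmxK z) mul_row_block.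
  by rewrite !(mul0mx, mulmx0, mulmx1, addr0, add0r, add_row_mx).
pose W1 : 'M[R]_(n + p, k + (p + p)) :=
  block_mx W (row_mx 0 0) 0 (row_mx 1%:M (- 1%:M)).
pose W2 : 'M[R]_(k + (p + p), k + p) :=
  col_mx (row_mx 1%:M 0) (row_mx 0 (col_mx 1%:M (- 1%:M))).
have := net_map_layer W1 (row_mx b 0)
  (net_map_comp_affine W2 0 (IH (net_eval N) (fun=> erefl))).
congr net_map; apply: funext => z.
have -> : z *m W1 + row_mx b 0 =
    row_mx (lsubmx z *m W + b) (row_mx (rsubmx z) (- rsubmx z)).
  rewrite /W1 -{1}(hsubmxK z) mul_row_block !mul_mx_row.
  by rewrite !(mul0mx, mulmx0, mulmx1, mulmxN, addr0, add0r, add_row_mx).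
rewrite !relu_row_mx /W2 addr0 mul_row_col !mul_mx_row mul_row_col.
rewrite !(mul0mx, mulmx0, mulmx1, mulmxN, addr0, add0r, add_row_mx).
by rewrite row_mxKl row_mxKr relu_subN -NF.
Qed.

Lemma net_map_swap n m :
  net_map (fun z : 'rV[R]_(n + m) => row_mx (rsubmx z) (lsubmx z)).
Proof.
exists (NOut (col_mx (row_mx 0 1%:M) (row_mx 1%:M 0)) 0) => z /=.
rewrite addr0 -{1}(hsubmxK z) mul_row_col !mul_mx_row.
by rewrite !(mul0mx, mulmx0, mulmx1, addr0, add0r, add_row_mx).
Qed.

Lemma net_map_pair n m1 m2 (F : 'rV[R]_n -> 'rV[R]_m1) (G : 'rV_n -> 'rV_m2) :
  net_map F -> net_map G -> net_map (fun x => row_mx (F x) (G x)).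
Proof.
move=> NF NG.
have dup : net_map (fun x : 'rV[R]_n => row_mx x x).
  by exists (NOut (row_mx 1%:M 1%:M) 0) => x /=; rewrite addr0 mul_mx_row mulmx1.
have := net_map_comp (net_map_comp (net_map_comp (net_map_comp dup
  (net_map_par_id n NF)) (net_map_swap m1 n)) (net_map_par_id m1 NG))
  (net_map_swap m2 m1).
by congr net_map; apply: funext => x /=; rewrite !(row_mxKl, row_mxKr).
Qed.

Definition net_fun n (phi : 'rV[R]_n -> R) := net_map (fun z => (phi z)%:M : 'rV_1).

Lemma net_fun_cst n c : net_fun (fun _ : 'rV[R]_n => c).
Proof. by exists (NOut 0 c%:M) => x /=; rewrite mulmx0 add0r. Qed.

Lemma net_fun_coord n (i : 'I_n) : net_fun (fun z : 'rV[R]_n => z 0 i).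
Proof.
exists (NOut (delta_mx i 0) 0) => z /=; rewrite addr0 -colE.
by apply/matrixP => ? ?; rewrite !ord1 !mxE eqxx mulr1n.
Qed.

Lemma net_fun_lin n (phi psi : 'rV[R]_n -> R) a b c :
  net_fun phi -> net_fun psi -> net_fun (fun z => a * phi z + b * psi z + c).
Proof.
move=> Nphi Npsi.
have := net_map_comp (net_map_pair Nphi Npsi) (net_map_affine (col_mx a%:M b%:M) c%:M).
congr net_map; apply: funext => z /=.
by rewrite mul_row_col -!scalar_mxM !raddfD /= [phi z * a]mulrC [psi z * b]mulrC.
Qed.

Lemma net_fun_relu n (phi : 'rV[R]_n -> R) :
  net_fun phi -> net_fun (fun z => Num.max (phi z) 0).
Proof.
move=> Nphi; have := net_map_comp Nphi (net_map_layer 1%:M 0 (net_map_affine 1%:M 0)).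
congr net_map; apply: funext => z /=; rewrite !addr0 !mulmx1.
by apply/matrixP => ? ?; rewrite !ord1 !mxE eqxx !mulr1n.
Qed.

Lemma net_fun_max n (phi psi : 'rV[R]_n -> R) :
  net_fun phi -> net_fun psi -> net_fun (fun z => Num.max (phi z) (psi z)).
Proof.
move=> Nphi Npsi.
have := net_fun_lin 1 1 0 (net_fun_relu (net_fun_lin 1 (-1) 0 Nphi Npsi)) Npsi.
congr net_fun; apply: funext => z; set a := phi z; set b := psi z.
by case: (lerP a b) => ?; case: (ler0P (1 * a + -1 * b + 0)) => ?; lra.
Qed.

Lemma net_fun_norm n (phi : 'rV[R]_n -> R) :
  net_fun phi -> net_fun (fun z => `|phi z|).
Proof.
move=> Nphi; have := net_fun_max Nphi (net_fun_lin (-1) 0 0 Nphi Nphi).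
congr net_fun; apply: funext => z.
by rewrite mul0r !addr0 mulN1r maxrN.
Qed.

Lemma net_fun_sum n (I : Type) (s : seq I) (phi : I -> 'rV[R]_n -> R) :
  (forall i, net_fun (phi i)) -> net_fun (fun z => \sum_(i <- s) phi i z).
Proof.
move=> Nphi; elim: s => [|i s IH].
  by have := net_fun_cst n 0; congr net_fun; apply: funext => z; rewrite big_nil.
have := net_fun_lin 1 1 0 (Nphi i) IH.
by congr net_fun; apply: funext => z; rewrite big_cons !mul1r addr0.
Qed.

Lemma net_fun_bigmax n (I : Type) (s : seq I) (phi : I -> 'rV[R]_n -> R) x0 :
  net_fun x0 -> (forall i, net_fun (phi i)) ->
  net_fun (fun z => \big[Num.max/x0 z]_(i <- s) phi i z).
Proof.
move=> Nx0 Nphi; elim: s => [|i s IH].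
  by move: Nx0; congr net_fun; apply: funext => z; rewrite big_nil.
by have := net_fun_max (Nphi i) IH; congr net_fun; apply: funext => z; rewrite big_cons.
Qed.

Lemma net_map_row n m (phi : 'I_m -> 'rV[R]_n -> R) :
  (forall j, net_fun (phi j)) -> net_map (fun z => \row_j phi j z).
Proof.
elim: m phi => [|m IH] phi Nphi.
  by exists (NOut 0 0) => z; apply/matrixP => ? [].
have := net_map_pair (Nphi ord0) (IH _ (fun j => Nphi (lift ord0 j))).
congr net_map; apply: funext => z; apply/matrixP => i j; rewrite !mxE.
case: splitP => j' /= ej; rewrite !mxE; last by congr phi; apply: val_inj.
by rewrite !ord1 eqxx mulr1n; congr phi; apply: val_inj; rewrite /= ej ord1.
Qed.

End ReluNets.

Section RealEstimates.
Variable R : realType.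

Lemma bigmax_penalty_approx (I : eqType) (c0 : I) (s : seq I) (G D : I -> R)
    (a e eta rho B L : R) :
  {in c0 :: s, forall c, 0 <= D c} ->
  {in c0 :: s, forall c, D c < eta -> `|a - G c| < e} ->
  {in c0 :: s, forall c, `|G c| <= B} -> `|a| <= B ->
  0 <= L -> 2 * B <= L * eta -> L * rho <= e -> rho <= eta ->
  (exists2 c, c \in s & D c < rho) ->
  `|a - \big[Num.max/G c0 - L * D c0]_(c <- s) (G c - L * D c)| <= 2 * e.
Proof.
move=> D0 Gnear GB aB L0 LB Le rho_eta [c cs Dc].
have cs' : c \in c0 :: s by rewrite inE cs orbT.
have e0 : 0 <= e by have := D0 c cs'; nra.
have upper : forall c, c \in c0 :: s -> G c - L * D c <= a + e.
  move=> c' c's; have LD := mulr_ge0 L0 (D0 c' c's).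
  have [Dc'|Dc'] := ltP (D c') eta.
    by have := Gnear c' c's Dc'; rewrite ltr_norml; lra.
  have := GB c' c's; have := ler_wpM2l L0 Dc'; move: aB.
  by rewrite !ler_norml; nra.
have lower : a - 2 * e <= G c - L * D c.
  have := Gnear c cs' (lt_le_trans Dc rho_eta); rewrite ltr_norml.
  have := ler_wpM2l L0 (ltW Dc); lra.
have := @le_bigmax_seq _ _ _ s (G c0 - L * D c0) c xpredT
  (fun c' : I => G c' - L * D c') cs isT.
have : \big[Num.max/G c0 - L * D c0]_(c <- s) (G c - L * D c) <= a + e.
  rewrite big_seq; apply: bigmax_le => [|c' c's]; apply: upper.
    by rewrite mem_head.
  by rewrite inE c's orbT.
rewrite ler_norml; lra.
Qed.

Lemma normr_mx_entry_le m n (M : 'M[R]_(m, n)) i j : `|M i j| <= `|M|.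
Proof.
rewrite [leRHS]/Num.Def.normr /= mx_normrE; apply/bigmax_geP; right => /=.
by exists (i, j).
Qed.

Lemma mx_normr_le m n (M : 'M[R]_(m, n)) a :
  0 <= a -> (forall i j, `|M i j| <= a) -> `|M| <= a.
Proof.
move=> a0 Ma; rewrite [leLHS]/Num.Def.normr /= mx_normrE.
by apply: bigmax_le => // -[i j] _; exact: Ma.
Qed.

End RealEstimates.

Section InnerProduct.
Variables (R : realType) (V : normedModType R) (ip : V -> V -> R).
Hypothesis ipP : inner_product_inducing_norm ip.

Lemma ipDl u v w : ip (u + v) w = ip u w + ip v w.
Proof. by case: ipP => _ lin _; have := lin 1 u v w; rewrite scale1r mul1r. Qed.

Lemma ipZl a u w : ip (a *: u) w = a * ip u w.
Proof.
have ip0 : ip 0 w = 0 by apply/(addrI (ip 0 w)); rewrite -ipDl !addr0.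
by case: ipP => _ lin _; have := lin a u 0 w; rewrite !addr0 ip0 addr0.
Qed.

Lemma ipBl u v w : ip (u - v) w = ip u w - ip v w.
Proof. by rewrite ipDl -scaleN1r ipZl mulN1r. Qed.

Lemma ip_polarization u v : 4 * ip u v = `|u + v| ^+ 2 - `|u - v| ^+ 2.
Proof.
case: ipP => ipC _ ipnorm.
have ipBr (a b c : V) : ip a (b - c) = ip a b - ip a c.
  by rewrite ipC ipBl !(ipC _ a).
have ipDr (a b c : V) : ip a (b + c) = ip a b + ip a c by rewrite ipC ipDl !(ipC _ a).
by rewrite -!ipnorm !ipBl !ipDl !ipBr !ipDr (ipC v u); ring.
Qed.

Lemma ip_norm_le u v : `|ip u v| <= `|u| * `|v|.
Proof.
suff ip_le w : ip w v <= `|w| * `|v|.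
  by rewrite ler_norml ip_le andbT lerNl -mulN1r -ipZl scaleN1r -(normrN u) ip_le.
have := ip_polarization w v; have := ler_normD w v.
have : (`|w| - `|v|) ^+ 2 <= `|w - v| ^+ 2.
  by rewrite -real_normK ?num_real // lerXn2r ?nnegrE ?ler_dist_dist.
have := normr_ge0 w; have := normr_ge0 v; have := normr_ge0 (w + v).
nra.
Qed.

End InnerProduct.

Section Rkhs.
Variables (R : realType) (X : Type) (V : normedModType R) (ip : V -> V -> R).
Variables (ev : V -> X -> R) (kappa : X -> X -> R) (ksec : X -> V).
Hypothesis rkhsP : is_RKHS ip ev kappa ksec.

Lemma rkhs_evB f c x : ev f x - ev c x = ev (f - c) x.
Proof. by case: rkhsP => ipP _ _ _ rep; rewrite -!rep ipBl. Qed.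

Lemma rkhs_ev_lipschitz f c x : `|ev f x - ev c x| <= `|f - c| * `|ksec x|.
Proof. by case: rkhsP => ipP _ _ _ rep; rewrite rkhs_evB -rep ip_norm_le. Qed.

Lemma rkhs_ev_continuous x : continuous (ev ^~ x).
Proof.
move=> f; apply/cvgrPdist_lt => e e0.
have k0 : 0 < `|ksec x| + 1 by rewrite ltr_pwDr.
near=> c; apply: le_lt_trans (rkhs_ev_lipschitz f c x) _.
apply: (@le_lt_trans _ _ (`|f - c| * (`|ksec x| + 1))); first by rewrite ler_wpM2l ?lerDl.
rewrite -ltr_pdivlMr //; near: c; exact: (cvgr_dist_lt id f cvg_id _ (divr_gt0 e0 k0)).
Unshelve. all: by end_near. Qed.

Lemma rkhs_sampling_inj (Lam : set nat) (xs : nat -> X) f c :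
  sampling_seq ev Lam xs -> (forall l, Lam l -> ev f (xs l) = ev c (xs l)) -> f = c.
Proof.
move=> [C [C1 samp]] fc; have [+ _] := samp (f - c).
have -> : (\esum_(l in Lam) ((ev (f - c) (xs l)) ^+ 2)%:E = 0)%E.
  by apply: esum1 => l Ll; rewrite -rkhs_evB fc // subrr expr0n.
rewrite lee_fin exprn_even_le0 //= mulf_eq0 invr_eq0 normr_eq0 subr_eq0.
by case/orP => /eqP // C0; move: C1; rewrite C0 ler10.
Qed.

End Rkhs.

Section SampleDistance.
Variables (R : realType) (X : Type) (V : ptopologicalType).
Variables (ev : V -> X -> R) (xs : nat -> X).
Hypothesis ev_continuous : forall x, continuous (ev ^~ x).

Definition sample_dist n f c := \sum_(i < n) `|ev f (xs i) - ev c (xs i)|.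

Lemma sample_dist_ge0 n f c : 0 <= sample_dist n f c.
Proof. exact: sumr_ge0. Qed.

Lemma sample_dist_ge_term n f c l : (l < n)%N ->
  `|ev f (xs l) - ev c (xs l)| <= sample_dist n f c.
Proof.
move=> ln; rewrite /sample_dist (bigD1 (Ordinal ln)) //= lerDl.
exact: sumr_ge0.
Qed.

Lemma sample_dist_continuous n c : continuous (sample_dist n ^~ c).
Proof.
have -> : sample_dist n ^~ c = \sum_(i < n) (fun f => `|ev f (xs i) - ev c (xs i)|).
  by rewrite fct_sumE.
move=> f; apply: (big_ind (fun h : V -> R => {for f, continuous h})) => [|h1 h2|i _].
- exact: cst_continuous.
- exact: continuousD.
- apply: (continuous_comp _ (@norm_continuous _ R^o _)).
  by apply: cvgB; [exact: ev_continuous | exact: cvg_cst].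
Qed.

Lemma sample_dist_cover n (C : set V) rho : compact C -> 0 < rho ->
  exists s : seq V, (forall c, c \in s -> C c) /\
    forall f, C f -> exists2 c, c \in s & sample_dist n f c < rho.
Proof.
rewrite compact_cover => cC rho0.
have [||D DC Dcov] := cC _ C (fun c => sample_dist n ^~ c @^-1` `]-oo, rho[).
- move=> c _; apply: open_comp; last exact: open_lt.
  by move=> f _; exact: sample_dist_continuous.
- move=> f Cf; exists f => //=.
  by rewrite /sample_dist big1 ?in_itv //= => i _; rewrite subrr normr0.
exists (finmap.enum_fset D); split => [c /DC|f /Dcov[c Dc fc]]; first by rewrite in_setE.
by exists c => //; move: fc; rewrite /= in_itv.
Qed.

Definition samples n f : 'rV[R]_n := \row_(i < n) ev f (xs i).

Definition penalized n K L (g : V -> 'rV[R]_K) k (z : 'rV[R]_n) c :=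
  g c 0 k - L * \sum_(i < n) `|z 0 i - ev c (xs i)|.

(* The McShane extension of [g] from the finite net [c0 :: s], with Lipschitz
   constant [L] for the l1 distance between samples. *)
Definition envelope n K L c0 (s : seq V) (g : V -> 'rV[R]_K) :
    'rV[R]_n -> 'rV[R]_K := fun z =>
  \row_k \big[Num.max/penalized L g k z c0]_(c <- s) penalized L g k z c.

Lemma penalized_samples n K L (g : V -> 'rV[R]_K) k f :
  penalized L g k (samples n f) = fun c => g c 0 k - L * sample_dist n f c.
Proof.
apply: funext => c; rewrite /penalized; congr (_ - _ * _).
by apply: eq_bigr => i _; rewrite mxE.
Qed.

Lemma envelope_net n K L c0 s (g : V -> 'rV[R]_K) :
  net_map (envelope L c0 s g : 'rV[R]_n -> 'rV_K).
Proof.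
have pen_net k c : net_fun (penalized L g k ^~ c : 'rV[R]_n -> R).
  have := net_fun_lin (- L) 0 (g c 0 k)
    (net_fun_sum (index_enum 'I_n) (fun i => net_fun_norm
       (net_fun_lin 1 0 (- ev c (xs i)) (net_fun_coord i) (net_fun_coord i))))
    (net_fun_cst n 0).
  congr net_fun; apply: funext => z; rewrite /penalized mul0r addr0 mulNr addrC.
  by under eq_bigr do rewrite mul1r mul0r addr0.
by apply: net_map_row => k; exact: (net_fun_bigmax s (pen_net k c0) (pen_net k)).
Qed.

Lemma envelope_approx K (C : set V) (g : V -> 'rV[R]_K) c0 n e eta :
  compact C -> {within C, continuous g} -> C c0 -> 0 < e -> 0 < eta ->
  (forall f c, C f -> C c -> sample_dist n f c < eta -> `|g f - g c| < e) ->
  exists L s, forall f, C f -> `|g f - envelope L c0 s g (samples n f)| <= 2 * e.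
Proof.
move=> cC gC Cc0 e0 eta0 close.
have [B gB] : exists B, forall f, C f -> `|g f| <= B.
  have [M [_ gM]] := compact_bounded (continuous_compact gC cC).
  by exists (M + 1) => f Cf; apply: (gM (M + 1)); [rewrite ltrDl | exists f].
have B0 : 0 <= B by exact: le_trans (gB c0 Cc0).
pose L := 2 * B / eta; pose rho := Num.min eta (e / (L + 1)).
have L0 : 0 <= L by apply: divr_ge0; [exact: mulr_ge0 | exact: ltW].
have rho0 : 0 < rho by rewrite lt_min eta0 divr_gt0 // ltr_wpDl.
have [s [sC cover]] := sample_dist_cover n cC rho0.
exists L, s => f Cf; apply: mx_normr_le => [|i j]; first by rewrite pmulr_rge0 ?ltW.
have Cs : {in c0 :: s, forall c, C c} by move=> c; rewrite inE => /predU1P[->|/sC].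
rewrite !mxE ord1 penalized_samples.
apply: (bigmax_penalty_approx (B := B) (eta := eta) (rho := rho)) => //.
- by move=> c _; exact: sample_dist_ge0.
- move=> c /Cs Cc /(close f c Cf Cc); apply: le_lt_trans.
  by have := normr_mx_entry_le (g f - g c) 0 j; rewrite !mxE.
- by move=> c /Cs /gB; apply: le_trans; exact: normr_mx_entry_le.
- exact: le_trans (normr_mx_entry_le _ _ _) (gB f Cf).
- by rewrite /L divfK ?gt_eqF.
- have : rho * (L + 1) <= e by rewrite -ler_pdivlMr ?ltr_wpDl // ge_min lexx orbT.
  by have := ltW rho0; nra.
- by rewrite ge_min lexx.
- exact: cover.
Qed.

Section Separating.
Hypothesis ev_separates : forall f c, (forall l, ev f (xs l) = ev c (xs l)) -> f = c.

Lemma sample_dist_eventually_large (f c : V) : f != c ->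
  \forall p \near nbhs (f, c) & i \near \oo, i.+1%:R^-1 <= sample_dist i p.1 p.2.
Proof.
move=> fc; have /existsNP[l /eqP fcl] : ~ forall l, ev f (xs l) = ev c (xs l).
  by move/ev_separates => fc'; rewrite fc' eqxx in fc.
pose gap := `|ev f (xs l) - ev c (xs l)|.
have gap0 : 0 < gap by rewrite normr_gt0 subr_eq0.
have gap_cont :
    {for (f, c), continuous (fun p : V * V => `|ev p.1 (xs l) - ev p.2 (xs l)|)}.
  apply: (continuous_comp _ (@norm_continuous _ R^o _)); apply: cvgB.
  - exact: (cvg_comp fst (ev ^~ (xs l)) cvg_fst (@ev_continuous (xs l) f)).
  - exact: (cvg_comp snd (ev ^~ (xs l)) cvg_snd (@ev_continuous (xs l) c)).
have gap2 : 0 < gap / 2 by rewrite divr_gt0.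
near=> p i.
apply/ltW/(@lt_trans _ _ (gap / 2)).
  by rewrite /=; near: i; exact: (near_infty_natSinv_lt (PosNum gap2)).
apply: lt_le_trans (@sample_dist_ge_term i p.1 p.2 l _).
- by near: p; apply: (cvgr_gt _ gap_cont); rewrite gtr_pMr // invf_lt1 // ltr1n.
- by near: i; exact: nbhs_infty_gt.
Unshelve. all: by end_near. Qed.

Lemma sample_dist_uniform (W : normedModType R) (C : set V) (g : V -> W) e :
  compact C -> {within C, continuous g} -> 0 < e ->
  exists2 n, (0 < n)%N & forall f c, C f -> C c ->
    sample_dist n f c < n.+1%:R^-1 -> `|g f - g c| < e.
Proof.
move=> cC gC e0.
have : \forall n \near \oo, C `*` C `<=`
    [set p | sample_dist n p.1 p.2 < n.+1%:R^-1 -> `|g p.1 - g p.2| < e].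
  apply: ((near_covering_withinP _).2
    ((compact_near_coveringP _).1 (compact_setX cC cC))).
  move=> [f c] [/= Cf Cc]; have [<-|fc] := eqVneq f c.
    have gf : \forall y \near f, C y -> `|g f - g y| < e / 2.
      exact: cvgr_dist_lt ((subspace_continuousP _ _).1 gC f Cf) _ (divr_gt0 e0 _).
    have gff : \forall p \near (f, f), (C `*` C) p -> `|g p.1 - g p.2| < e.
      have gf1 : \forall p \near (f, f), C p.1 -> `|g f - g p.1| < e / 2.
        exact: cvg_fst gf.
      have gf2 : \forall p \near (f, f), C p.2 -> `|g f - g p.2| < e / 2.
        exact: cvg_snd gf.
      near=> p => -[Cp1 Cp2]; apply: le_lt_trans (ler_distD (g f) _ _) _.
      rewrite distrC (splitr e) ltrD //; [move: Cp1 | move: Cp2]; near: p.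
      - exact: gf1.
      - exact: gf2.
    by near=> p i => Cp _; move: Cp; rewrite /=; near: p.
  apply: filterS (sample_dist_eventually_large fc) => -[p i] /= large _ small.
  by have := le_lt_trans large small; rewrite ltxx.
case/(filter_ex \o filterI (nbhs_infty_gt 0)) => n [n0 close].
by exists n => // f c Cf Cc; apply: (close (f, c)).
Unshelve. all: by end_near. Qed.

End Separating.

End SampleDistance.

Theorem mainTheorem7 (R : realType) (Kout : nat) (X : Type)
    (V : completeNormedModType R) (ip : V -> V -> R) (ev : V -> X -> R)
    (kappa : X -> X -> R) (ksec : X -> V) (Lam : set nat) (xs : nat -> X)
    (Kset : set V) :
  (0 < Kout)%N ->
  inhabited X ->
  is_RKHS ip ev kappa ksec ->
  separable_space V ->
  complete_interpolating_sampling ev Lam xs ->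
  Kset !=set0 ->
  locally_compact_subset Kset ->
  forall g : V -> 'rV[R]_Kout, {within Kset, continuous g} ->
  forall C : set V, compact C -> C `<=` Kset ->
  forall eps : R, 0 < eps ->
  exists F : V -> 'rV[R]_Kout,
    is_SNO ip ksec F /\ (forall f, C f -> `|g f - F f| < eps).
Proof.
move=> _ [x0] rkhs _ [sampling _] _ _ g gK C cC CK eps eps0.
have [[c0 Cc0]|C0] := pselect (C !=set0); last first.
  exists (fun=> 0); split=> [|f Cf]; last by case: C0; exists f.
  by exists 1%N; split=> //; exists (fun=> x0), (NOut 0 0) => f /=; rewrite mulmx0 addr0.
have ev_cont := rkhs_ev_continuous rkhs.
have ev_sep (f c : V) : (forall l, ev f (xs l) = ev c (xs l)) -> f = c.
  by move=> fc; apply: (rkhs_sampling_inj rkhs sampling) => l _; exact: fc.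
have gC := continuous_subspaceW CK gK.
have e0 : 0 < eps / 4 by rewrite divr_gt0.
have [n n0 close] := sample_dist_uniform ev_cont ev_sep cC gC e0.
have eta0 : 0 < n.+1%:R^-1 :> R by rewrite invr_gt0.
have [L [s approx]] := envelope_approx ev_cont cC gC Cc0 e0 eta0 close.
have [N NE] := envelope_net ev xs n L c0 s g.
exists (fun f => net_eval N (samples ev xs n f)); split.
  exists n; split=> //; exists (fun i : 'I_n => xs i), N => f; congr net_eval.
  by apply/rowP => i; rewrite !mxE; case: rkhs => _ _ _ _ ->.
by move=> f Cf; rewrite NE; apply: le_lt_trans (approx f Cf) _; lra.
Qed.
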